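(* Let $X$ be a pure simplicial complex of dimension $d$ with $n\ge1$ facets and $v$ vertices. Then $X$ is stacked if and only if $v=n+d$ and for every pair of facets $f,f'$ of $X$ (including $f=f'$) there is a unique path from $f$ to $f'$.
   Context: A simplicial complex $X$ on a finite vertex set $V$ is a family of subsets (faces) of $V$ closed under taking subsets, every element of $V$ lying in some face; facets are inclusion-maximal faces. $X$ is pure of dimension $d$ if every facet has $d+1$ elements; a codimension one face is a face with $d$ elements. $X$ is stacked if it is pure of some dimension $d$ and its facets can be ordered $F_0,F_1,\dots,F_k$ (a stacking order) such that for each $p\ge 1$, $F_p$ contains exactly one vertex $v_p$ not in $F_0\cup\dots\cup F_{p-1}$ (called the free vertex of $F_p$), and $F_p\setminus\{v_p\}\subseteq F_j$ for some $j<p$. A walk is a sequence of facets $f_1,\dots,f_p$ ($p\ge 1$) such that each $f_i\cap f_{i+1}$ has exactly $d$ elements; a path is a walk in which the faces $f_i\cap f_{i+1}$, $1\le i<p$, are pairwise distinct; it is a path from $f_1$ to $f_p$. (The one-term sequence $f$ is a path from $f$ to $f$.) *)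

From mathcomp Require Import all_boot.
Set Implicit Arguments. Unset Strict Implicit. Unset Printing Implicit Defensive.

Section Complexes.
Variable V : finType.

Definition is_complex (X : {set {set V}}) : Prop :=
  (forall F G : {set V}, F \in X -> G \subset F -> G \in X) /\
  (forall x : V, exists F, F \in X /\ x \in F).

Definition facets (X : {set {set V}}) : {set {set V}} :=
  [set F in X | [forall G in X, (F \subset G) ==> (G == F)]].

Definition pure (X : {set {set V}}) (d : nat) : Prop :=
  forall F, F \in facets X -> #|F| = d.+1.

Definition stacking_order (X : {set {set V}}) (s : seq {set V}) : Prop :=
  0 < size s /\ uniq s /\ (forall F, F \in s <-> F \in facets X) /\
  forall p, 0 < p < size s ->
    exists v : V,
      nth set0 s p :\: (\bigcup_(G <- take p s) G) = [set v] /\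
      exists2 j, j < p & nth set0 s p :\ v \subset nth set0 s j.

Definition stacked (X : {set {set V}}) : Prop :=
  exists d, pure X d /\ exists s, stacking_order X s.

Definition is_walk (X : {set {set V}}) (d : nat) (w : seq {set V}) : Prop :=
  0 < size w /\
  (forall i, i < size w -> nth set0 w i \in facets X) /\
  (forall i, i.+1 < size w -> #|nth set0 w i :&: nth set0 w i.+1| = d).

Definition is_path (X : {set {set V}}) (d : nat) (w : seq {set V}) : Prop :=
  is_walk X d w /\
  uniq [seq nth set0 w i :&: nth set0 w i.+1 | i <- iota 0 (size w).-1].

Definition is_path_from (X : {set {set V}}) (d : nat) (f f' : {set V})
    (w : seq {set V}) : Prop :=
  is_path X d w /\ nth set0 w 0 = f /\ nth set0 w (size w).-1 = f'.

End Complexes.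

(* A facet F added to a stacked complex with free vertex v meets every earlier facet
   inside the ridge F :\ v, so F is a leaf of the dual graph: it can only occur at an
   end of a path, and a path leaving F crosses F :\ v into the last earlier facet
   containing that ridge.  Induction along a stacking order thus gives existence and
   uniqueness of paths, each step adding exactly one vertex.  Conversely, connectivity
   orders the facets so that each is adjacent to an earlier one; each then adds at most
   one vertex, and v = n + d forces exactly one, which is the stacking condition. *)

From mathcomp Require Import all_boot zify.
Set Implicit Arguments. Unset Strict Implicit. Unset Printing Implicit Defensive.

Section SeqRev.
Variable T : Type.

Lemma head_rev (x0 : T) s : head x0 (rev s) = last x0 s.
Proof. by case/lastP: s => [|s y] //; rewrite rev_rcons last_rcons. Qed.

Lemma last_rev (x0 : T) s : last x0 (rev s) = head x0 s.
Proof. by case: s => [|x s] //; rewrite rev_cons last_rcons. Qed.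

End SeqRev.

Lemma cardsUD (V : finType) (A B : {set V}) : #|A :|: B| = #|A| + #|B :\: A|.
Proof. have := cardsUI A B; have := cardsID A B; rewrite setIC; lia. Qed.

Section Paths.
Variables (V : finType) (d : nat).
Implicit Types (P Q : pred {set V}) (w t : seq {set V}) (a b : {set V}).

Fixpoint ridges w : seq {set V} :=
  if w is a :: ((b :: _) as t) then (a :&: b) :: ridges t else [::].

Definition pathb P w :=
  [&& w != [::], all P w, all (fun r : {set V} => #|r| == d) (ridges w) & uniq (ridges w)].

Lemma ridges_rcons w b :
  ridges (rcons w b) = if w is [::] then [::] else rcons (ridges w) (last b w :&: b).
Proof.
elim: w => [//|a t IH] /=.
by case: t IH => [|c t] //= ->.
Qed.

Lemma ridges_rev w : ridges (rev w) = rev (ridges w).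
Proof.
elim: w => [//|a t IH].
rewrite rev_cons ridges_rcons last_rev; case: t IH => [//|b t] IH.
case E: (rev (b :: t)) => [|c u]; first by move: (congr1 size E); rewrite size_rev.
by rewrite -E IH /= rev_cons setIC.
Qed.

Lemma ridges_cat l a r : ridges (l ++ a :: r) = ridges (rcons l a) ++ ridges (a :: r).
Proof.
elim: l => [//|c l IH] /=.
by case: l IH => [|e l] //= ->.
Qed.

Lemma ridges_nth w :
  ridges w = [seq nth set0 w i :&: nth set0 w i.+1 | i <- iota 0 (size w).-1].
Proof.
elim: w => [//|a t IH]; case: t IH => [//|b t] IH.
rewrite /= in IH *; rewrite IH; congr cons.
by rewrite -[1]/(1 + 0) iotaDl -map_comp.
Qed.

Lemma mem_ridges r a t : r \in ridges (a :: t) -> exists2 g, g \in t & r \subset g.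
Proof.
elim: t a => [//|b t IH] a /=; rewrite inE => /orP [/eqP ->|].
  by exists b; rewrite ?mem_head ?subsetIr.
by case: t IH => [//|c t] IH /IH [g Hg Hr]; exists g => //; rewrite inE Hg orbT.
Qed.

Lemma pathb1 P a : pathb P [:: a] = P a.
Proof. by rewrite /pathb /= ?andbT. Qed.

Lemma pathb_rev P w : pathb P w -> pathb P (rev w).
Proof.
case/and4P=> w_nil wP w_d w_uniq; apply/and4P.
by rewrite -size_eq0 size_rev size_eq0 all_rev ridges_rev all_rev rev_uniq.
Qed.

Lemma sub_pathb P Q w : subpred P Q -> pathb P w -> pathb Q w.
Proof.
move=> PQ /and4P [w_nil /allP wP w_d w_uniq]; apply/and4P; split => //.
by apply/allP => x /wP /PQ.
Qed.

Lemma eq_pathb P Q w : P =1 Q -> pathb P w = pathb Q w.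
Proof. by move=> PQ; rewrite /pathb (eq_all PQ). Qed.

Lemma pathb_restrict P Q w : pathb P w -> all Q w -> pathb Q w.
Proof. by case/and4P => w_nil _ w_d w_uniq wQ; apply/and4P. Qed.

Lemma pathb_cons P a b t : pathb P (a :: b :: t) ->
  [/\ pathb P (b :: t), P a, #|a :&: b| = d & (a :&: b) \notin ridges (b :: t)].
Proof.
case/and4P => _ /= /andP [Pa Pt] /andP [/eqP ab_d t_d] /andP [ab_new t_uniq].
by split => //; apply/and4P.
Qed.

Lemma is_pathE X w : is_path X d w <-> pathb (mem (facets X)) w.
Proof.
rewrite /is_path /is_walk /pathb ridges_nth all_map -size_eq0 -lt0n; split.
- case=> -[w_gt0 [wX w_d]] w_uniq; apply/and4P; split => //.
    by apply/(all_nthP set0) => i /wX.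
  by apply/allP => i; rewrite mem_iota => /andP [_ lti] /=; apply/eqP/w_d; lia.
- case/and4P => w_gt0 wX /allP w_d w_uniq; do !split => //.
    exact/(all_nthP set0 wX).
  by move=> i lti; apply/eqP/(w_d i); rewrite mem_iota; lia.
Qed.

Lemma is_path_fromE X f f' w : is_path_from X d f f' w <->
  [/\ pathb (mem (facets X)) w, head set0 w = f & last set0 w = f'].
Proof.
rewrite /is_path_from is_pathE nth0 nth_last.
by split => [[? [? ?]] | []].
Qed.

Definition paths_unique P := forall w1 w2, pathb P w1 -> pathb P w2 ->
  head set0 w1 = head set0 w2 -> last set0 w1 = last set0 w2 -> w1 = w2.

Definition paths_exist P := forall a b, P a -> P b ->
  exists w, [/\ pathb P w, head set0 w = a & last set0 w = b].

Lemma pathb_last_cover P (R : {set V}) w :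
  pathb P w -> has (fun g : {set V} => R \subset g) w ->
  exists a t, [/\ R \subset a, pathb P (a :: t), last a t = last set0 w
                & ~~ has (fun g : {set V} => R \subset g) t].
Proof.
elim: w => [//|a t IH] Pw /=.
case Ht: (has _ t) => /=; last by rewrite orbF => Ra; exists a, t; rewrite Ht.
case: t IH Pw Ht => [|b t] IH; first by [].
case/pathb_cons => Pt _ _ _ /(IH Pt) [c [u [Rc Pu last_u no_cover]]] _.
by exists c, u.
Qed.

Section Pure.
Variable P : pred {set V}.
Hypothesis P_pure : forall g, P g -> #|g| = d.+1.

Lemma adjacent_neq a b : P a -> #|a :&: b| = d -> a != b.
Proof. by move=> Pa ab_d; apply/eqP => ab; move: ab_d; rewrite -ab setIid P_pure //; lia. Qed.

Lemma meet_common_ridge a b (R : {set V}) : P a -> P b -> #|R| = d ->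
  R \subset a -> R \subset b -> a != b -> a :&: b = R.
Proof.
move=> Pa Pb R_d Ra Rb ab; apply/eqP; rewrite eq_sym eqEcard subsetI Ra Rb R_d /=.
rewrite leqNgt; apply: contra ab => ab_gt.
have aIb : a :&: b = a by apply/eqP; rewrite eqEcard subsetIl P_pure.
by rewrite eqEcard -{1}aIb subsetIr !P_pure ?ltnSn.
Qed.

End Pure.

Section Leaf.
Variables (s : seq {set V}) (F : {set V}) (v : V).
Let P : pred {set V} := fun g => g \in rcons s F.
Hypothesis P_pure : forall g, P g -> #|g| = d.+1.
Hypothesis vF : v \in F.
Hypothesis v_free : forall g, g \in s -> v \notin g.
Let R := F :\ v.

Lemma leaf_in : P F.
Proof. by rewrite /P mem_rcons mem_head. Qed.

Lemma card_leaf_ridge : #|R| = d.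
Proof. by have := cardsD1 v F; rewrite vF (P_pure leaf_in) /R; lia. Qed.

Lemma old_in g : g \in s -> P g.
Proof. by rewrite /P mem_rcons inE => ->; rewrite orbT. Qed.

Lemma in_old g : P g -> g != F -> g \in s.
Proof. by rewrite /P mem_rcons inE => /orP [/eqP ->|]; rewrite ?eqxx. Qed.

Lemma meet_leaf g : P g -> #|g :&: F| = d -> g :&: F = R.
Proof.
move=> Pg gF_d; have gs := in_old Pg (adjacent_neq P_pure Pg gF_d).
apply/eqP; rewrite eqEcard card_leaf_ridge gF_d leqnn andbT.
apply/subsetP => x; rewrite !inE => /andP [xg ->]; rewrite andbT.
by apply: contraTneq xg => ->; apply: v_free.
Qed.

Lemma leaf_meet g : P g -> #|F :&: g| = d -> F :&: g = R.
Proof. by rewrite setIC; apply: meet_leaf. Qed.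

(* Both ridges through an interior occurrence of [F] would be [R]. *)
Lemma leaf_not_inner l a b r : pathb P (l ++ a :: F :: b :: r) -> False.
Proof.
case/and4P => _ wP; rewrite ridges_cat all_cat cat_uniq => /andP [_] /= /and3P [aF_d Fb_d _].
case/and3P => _ _ /andP [+ _]; rewrite inE negb_or => /andP [+ _].
have Pa : P a by apply: (allP wP); rewrite mem_cat mem_head orbT.
have Pb : P b by apply: (allP wP); rewrite mem_cat !inE eqxx !orbT.
by rewrite (meet_leaf Pa (eqP aF_d)) (leaf_meet Pb (eqP Fb_d)) eqxx.
Qed.

Lemma leaf_at_end w : pathb P w -> F \in w -> head set0 w = F \/ last set0 w = F.
Proof.
move=> Pw /splitPr w_split; case: w_split Pw => l r.
case/lastP: l => [|l a] Pw; first by left.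
case: r Pw => [|b r]; first by right; rewrite last_cat.
by rewrite cat_rcons => /leaf_not_inner [].
Qed.

Lemma leaf_loop t : pathb P (F :: t) -> last F t = F -> t = [::].
Proof.
case: t => [//|b t] /= + tF; rewrite (lastI b t) tF.
case: (belast b t) => [|c m] /and4P [_ wP].
  by move=> /= /andP [/eqP]; rewrite setIid (P_pure leaf_in); lia.
have -> : ridges (F :: rcons (c :: m) F) = (F :&: c) :: ridges (rcons (c :: m) F) by [].
rewrite ridges_rcons /= all_rcons => /and3P [/eqP Fc_d /eqP mF_d _] /andP [+ _].
have Pc : P c by apply: (allP wP); rewrite !inE eqxx orbT.
have Pm : P (last c m).
  by apply: (allP wP); rewrite in_cons mem_rcons in_cons mem_last !orbT.
by rewrite (leaf_meet Pc Fc_d) (meet_leaf Pm mF_d) mem_rcons mem_head.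
Qed.

Lemma leaf_free_path w : pathb P w -> F \notin w -> pathb (mem s) w.
Proof.
move=> Pw Fw; apply: (pathb_restrict Pw); apply/allP => g gw.
apply: in_old; first by case/and4P: Pw => _ /allP /(_ g gw).
by apply: contraNneq Fw => <-.
Qed.

Lemma leaf_tail b t : pathb P (F :: b :: t) -> last b t != F -> pathb (mem s) (b :: t).
Proof.
case/pathb_cons => Pt _ Fb_d _ tF; apply: (leaf_free_path Pt).
apply/negP => /(leaf_at_end Pt) [/= bF|]; last by apply/eqP.
by move: Fb_d; rewrite bF setIid (P_pure leaf_in); lia.
Qed.

Section Uniqueness.
Hypothesis s_unique : paths_unique (mem s).

Lemma leaf_paths_unique t1 t2 : pathb P (F :: t1) -> pathb P (F :: t2) ->
  last F t1 = last F t2 -> t1 = t2.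
Proof.
case: t1 => [|g1 u1] P1; case: t2 => [|g2 u2] P2 //= last_eq.
- by have := leaf_loop P2 (esym last_eq).
- by have := leaf_loop P1 last_eq.
have u1F : last g1 u1 != F by apply/eqP => /(leaf_loop P1).
have s1 := leaf_tail P1 u1F.
have s2 : pathb (mem s) (g2 :: u2) by apply: (leaf_tail P2); rewrite -last_eq.
have [_ _ Fg1_d Fg1_new] := pathb_cons P1.
have [_ _ Fg2_d Fg2_new] := pathb_cons P2.
have g1s : g1 \in s by case/and4P: s1 => _ /andP [].
have g2s : g2 \in s by case/and4P: s2 => _ /andP [].
have Fg1 := leaf_meet (old_in g1s) Fg1_d; have Fg2 := leaf_meet (old_in g2s) Fg2_d.
have [g12|g12] := eqVneq g1 g2; first exact: s_unique s1 s2 g12 last_eq.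
have g21 : g2 :&: g1 = R.
  apply: (meet_common_ridge P_pure); rewrite ?old_in ?card_leaf_ridge 1?eq_sym //.
  - by rewrite -Fg2 subsetIr.
  - by rewrite -Fg1 subsetIr.
(* [g2] and [g1] share the ridge [R], so [g2 g1 u1] is a path of [s]; it must be [g2 u2],
   and then [R] is crossed twice in [F g2 u2]. *)
have s21 : pathb (mem s) (g2 :: g1 :: u1).
  case/and4P: s1 => _ s1P s1_d s1_uniq; apply/and4P; split => //.
  - by rewrite -cat1s all_cat s1P /= g2s.
  - by rewrite [ridges _]/= /= g21 card_leaf_ridge eqxx.
  - by rewrite [ridges _]/= /= g21 -Fg1 Fg1_new.
have [u2E] := s_unique s21 s2 erefl last_eq.
by move: Fg2_new; rewrite -u2E /= Fg2 g21 mem_head.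
Qed.

Lemma paths_unique_rcons : paths_unique P.
Proof.
have from_leaf w1 w2 : pathb P w1 -> pathb P w2 -> head set0 w1 = F ->
    head set0 w2 = F -> last set0 w1 = last set0 w2 -> w1 = w2.
  case: w1 => [|a1 t1]; first by case/and4P.
  case: w2 => [|a2 t2]; first by move=> _ /and4P [].
  by move=> P1 P2 /= a1F a2F; subst a1 a2 => last_eq; rewrite (leaf_paths_unique P1 P2 last_eq).
move=> w1 w2 P1 P2 head_eq last_eq.
have [Fw|] := boolP ((F \in w1) || (F \in w2)); last first.
  rewrite negb_or => /andP [Fw1 Fw2].
  exact: s_unique (leaf_free_path P1 Fw1) (leaf_free_path P2 Fw2) head_eq last_eq.
have [headF|lastF] : head set0 w1 = F \/ last set0 w1 = F.
- case/orP: Fw => [/(leaf_at_end P1) //|/(leaf_at_end P2)].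
  by rewrite head_eq last_eq.
- by apply: from_leaf; rewrite -?head_eq.
rewrite -[w1]revK -[w2]revK; congr rev.
by apply: from_leaf; rewrite ?head_rev ?last_rev -?last_eq ?pathb_rev.
Qed.

End Uniqueness.

Section Existence.
Hypothesis s_connected : paths_exist (mem s).
Hypothesis ridge_old : s != [::] -> exists2 h, h \in s & R \subset h.

Lemma leaf_paths_exist b : P b -> exists w, [/\ pathb P w, head set0 w = F & last set0 w = b].
Proof.
move=> Pb; have [->|bF] := eqVneq b F; first by exists [:: F]; rewrite pathb1 leaf_in.
have bs := in_old Pb bF.
have [|h hs Rh] := ridge_old; first by apply: contraTneq bs => ->.
have [w [sw wh wb]] := s_connected hs bs.
have w_cover : has (fun g : {set V} => R \subset g) w.
  by case: w sw wh {wb} => [|a t]; [case/and4P | move=> _ /= ->; rewrite Rh].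
have [a [t [Ra Pt ta no_cover]]] := pathb_last_cover sw w_cover.
have a_in : a \in s by case/and4P: Pt => _ /andP [].
have Fa : F :&: a = R.
  apply: (meet_common_ridge P_pure); rewrite ?leaf_in ?old_in ?card_leaf_ridge ?subsetDl //.
  by apply: contraTneq vF => ->; apply: v_free.
exists (F :: a :: t); split => //; last by rewrite -wb -ta.
case/and4P: (sub_pathb old_in Pt) => _ tP t_d t_uniq; apply/and4P; split => //.
- by rewrite -cat1s all_cat tP /= leaf_in.
- by rewrite [ridges _]/= /= Fa card_leaf_ridge eqxx.
- rewrite [ridges _]/= /= Fa t_uniq andbT; apply/negP => /mem_ridges [g gt Rg].
  by move: no_cover => /hasPn /(_ g gt); rewrite Rg.
Qed.

Lemma paths_exist_rcons : paths_exist P.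
Proof.
move=> a b Pa Pb.
have [->|aF] := eqVneq a F; first exact: leaf_paths_exist.
have [->|bF] := eqVneq b F.
  have [w [Pw <- <-]] := leaf_paths_exist Pa.
  by exists (rev w); rewrite head_rev last_rev pathb_rev.
have [w [sw <- <-]] := s_connected (in_old Pa aF) (in_old Pb bF).
by exists w; rewrite (sub_pathb old_in sw).
Qed.

End Existence.
End Leaf.
End Paths.

Section Stacking.
Variables (V : finType) (d : nat).

Definition stacking_condition (s : seq {set V}) := forall p, 0 < p < size s ->
  exists v : V, nth set0 s p :\: (\bigcup_(G <- take p s) G) = [set v] /\
    exists2 j, j < p & nth set0 s p :\ v \subset nth set0 s j.

Lemma stacking_condition_rcons s F : stacking_condition (rcons s F) ->
  stacking_condition s /\
  (s != [::] -> exists v, [/\ v \in F, forall g, g \in s -> v \notin g,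
                           exists2 h, h \in s & F :\ v \subset h
                         & F :\: \bigcup_(G <- s) G = [set v]]).
Proof.
move=> sF_stack; split => [p /andP [p_gt0 lt_ps] | s_nil].
  have [|v [new [j lt_jp sub]]] := sF_stack p; first by rewrite p_gt0 size_rcons ltnS ltnW.
  rewrite !nth_rcons lt_ps (ltn_trans lt_jp lt_ps) in sub.
  rewrite nth_rcons lt_ps -cats1 (takel_cat _ (ltnW lt_ps)) in new.
  by exists v; split => //; exists j.
have [|v [new [j lt_js sub]]] := sF_stack (size s).
  by rewrite lt0n size_eq0 s_nil size_rcons ltnSn.
rewrite !nth_rcons ltnn eqxx lt_js in sub.
rewrite nth_rcons ltnn eqxx -cats1 take_size_cat // in new.
have /setDP [vF v_new] : v \in F :\: \bigcup_(G <- s) G by rewrite new set11.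
exists v; split => //.
- by move=> g gs; apply: contra v_new => vg; rewrite bigcup_seq; apply/bigcupP; exists g.
- by exists (nth set0 s j); rewrite ?mem_nth.
Qed.

Lemma stacking_paths_count s : s != [::] -> stacking_condition s ->
  (forall g, g \in s -> #|g| = d.+1) ->
  [/\ paths_unique d (mem s), paths_exist d (mem s) & #|\bigcup_(G <- s) G| = size s + d].
Proof.
elim/last_ind: s => [//|s F IH] _ /stacking_condition_rcons [s_stack F_leaf] sF_pure.
have s_pure g : g \in s -> #|g| = d.+1 by move=> gs; apply: sF_pure; rewrite mem_rcons inE gs orbT.
have F_card : #|F| = d.+1 by apply: sF_pure; rewrite mem_rcons mem_head.
rewrite big_rcons /= size_rcons.
have [s0|s_nil] := eqVneq s [::].
  subst s; have [v vF] : exists v, v \in F by apply/set0Pn; rewrite -card_gt0 F_card.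
  have empty_unique : paths_unique d (mem ([::] : seq {set V})).
    by move=> w1 w2 /and4P [w1_nil w1P _ _]; case: w1 w1_nil w1P.
  split; first exact: (paths_unique_rcons (v := v)).
    by apply: (paths_exist_rcons (v := v)) => // ? ? ?.
  by rewrite big_nil set0U F_card.
have [s_unique s_connected s_count] := IH s_nil s_stack s_pure.
have [v [vF v_free [h hs Fh] new]] := F_leaf s_nil.
split.
- exact: paths_unique_rcons sF_pure vF v_free s_unique.
- by apply: (paths_exist_rcons sF_pure vF v_free s_connected); exists h.
- by rewrite cardsUD s_count new cards1 addn1 addSn.
Qed.

End Stacking.

Lemma leq_unit_steps (f : nat -> nat) i j : i <= j ->
  (forall k, i <= k < j -> f k.+1 <= (f k).+1) -> f j <= f i + (j - i).
Proof.
elim: j => [|j IH]; first by rewrite leqn0 => /eqP -> _; rewrite subnn addn0.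
rewrite leq_eqVlt => /orP [/eqP <- _|lt_ij step]; first by rewrite subnn addn0.
have IHj : f j <= f i + (j - i).
  by apply: IH lt_ij _ => k /andP [ik kj]; apply: step; rewrite ik ltnW.
by have := step j; rewrite -ltnS lt_ij ltnSn => /(_ isT); lia.
Qed.

Section Converse.
Variables (V : finType) (d : nat).
Implicit Types (P : pred {set V}) (s : seq {set V}).

Definition adjacent_order s := forall p, 0 < p < size s ->
  exists2 j, j < p & #|nth set0 s p :&: nth set0 s j| = d.

Lemma pathb_crossing P s w : pathb d P w -> head set0 w \in s -> last set0 w \notin s ->
  exists a b, [/\ a \in s, P b, b \notin s & #|a :&: b| = d].
Proof.
elim: w => [//|a t IH] Pw /=.
case: t IH Pw => [|b t] IH Pw a_in; first by rewrite /= a_in.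
have [Pt _ ab_d _] := pathb_cons Pw.
have [b_in|b_out] := boolP (b \in s); first exact: IH.
by exists a, b; split => //; case/and4P: Pt => _ /andP [].
Qed.

Lemma adjacent_enumeration P : paths_exist d P -> 0 < #|P| ->
  exists s, [/\ uniq s, s =i P & adjacent_order s].
Proof.
move=> P_connected P_pos; have /card_gt0P [f0 Pf0] := P_pos.
suff [s [s_size s_uniq sP s_adj]] : exists s, [/\ size s = #|P|, uniq s, all P s & adjacent_order s].
  exists s; split => //; apply: subset_cardP; first by rewrite (card_uniqP s_uniq).
  by apply/subsetP => g /(allP sP).
have : #|P|.-1 < #|P| by rewrite prednK.
rewrite -[in X in exists _, [/\ size _ = X, _, _ & _]](prednK P_pos).
elim: (#|P|.-1) => [_|k IH lt_kP].
  exists [:: f0]; split => //=; first by rewrite andbT.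
  by move=> [|p] /andP [].
have [s [s_size s_uniq sP s_adj]] := IH (ltnW lt_kP).
have [g /andP [Pg g_out]] : exists g, P g && (g \notin s).
  apply/existsP; apply: contraTT lt_kP; rewrite negb_exists => /forallP s_full.
  rewrite -leqNgt -s_size -(card_uniqP s_uniq); apply/subset_leq_card/subsetP => x Px.
  by have := s_full x; rewrite negb_and negbK => /orP [/negP|].
have h_in : head set0 s \in s by rewrite -nth0 mem_nth // s_size.
have [w [Pw w_head w_last]] := P_connected _ g (allP sP _ h_in) Pg.
have [a [b [a_in Pb b_out ab_d]]] : exists a b, [/\ a \in s, P b, b \notin s & #|a :&: b| = d].
  by apply: (pathb_crossing Pw); rewrite ?w_head ?w_last.
exists (rcons s b); rewrite size_rcons s_size rcons_uniq b_out s_uniq all_rcons Pb sP.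
split => // p; rewrite size_rcons => /andP [p_gt0].
rewrite ltnS leq_eqVlt => /orP [/eqP ->|lt_ps].
  by exists (index a s); rewrite ?index_mem // !nth_rcons ltnn eqxx index_mem a_in nth_index // setIC.
have [|j lt_jp jp_d] := s_adj p; first by rewrite p_gt0.
by exists j; rewrite // !nth_rcons lt_ps (ltn_trans lt_jp lt_ps).
Qed.

Lemma stacking_condition_of_count s : (forall g, g \in s -> #|g| = d.+1) ->
  0 < size s -> adjacent_order s -> #|\bigcup_(G <- s) G| = size s + d ->
  stacking_condition s.
Proof.
move=> s_pure s_gt0 s_adj s_count.
set n := size s in s_gt0 s_adj s_count *.
pose U p := \bigcup_(G <- take p s) G.
pose new p := nth set0 s p :\: U p.
have U_step p : p < n -> #|U p.+1| = #|U p| + #|new p|.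
  by move=> lt_pn; rewrite /U (take_nth set0 lt_pn) big_rcons /= cardsUD.
have new_sub p : 0 < p < n -> exists2 j, j < p &
    new p \subset nth set0 s p :\: nth set0 s j /\ #|nth set0 s p :\: nth set0 s j| = 1.
  move=> p_range; have [j lt_jp jp_d] := s_adj p p_range; exists j => //; split.
    apply: setDS; rewrite /U bigcup_seq; apply: (bigcup_sup (nth set0 s j)).
    by rewrite -(nth_take set0 lt_jp) mem_nth // size_takel // ltnW; case/andP: p_range.
  by rewrite cardsD jp_d s_pure ?mem_nth //; [lia | case/andP: p_range].
have U_unit k : 1 <= k < n -> #|U k.+1| <= (#|U k|).+1.
  move=> k_range; have [j _ [sub card1]] := new_sub k k_range.
  case/andP: k_range => _ lt_kn; rewrite U_step // -addn1 leq_add2l -card1.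
  exact: subset_leq_card.
have U1 : #|U 1| = d.+1.
  by rewrite U_step // /new /U take0 big_nil setD0 cards0 s_pure ?mem_nth.
have U_grow i j : 0 < i <= j -> j <= n -> #|U j| <= #|U i| + (j - i).
  move=> /andP [i_gt0 le_ij] le_jn.
  apply: (@leq_unit_steps (fun k => #|U k|) _ _ le_ij) => k /andP [le_ik lt_kj].
  by apply: U_unit; rewrite (leq_trans i_gt0 le_ik) (leq_trans lt_kj le_jn).
have U_n : #|U n| = n + d by rewrite /U take_size.
move=> p /andP [p_gt0 lt_pn].
have [|j lt_jp [sub card1]] := new_sub p; first by rewrite p_gt0.
(* The [n - 1] later facets add at most one vertex each, and [#|U n| = #|U 1| + (n - 1)]. *)
have new_card : #|new p| = 1.
  apply/eqP; rewrite eqn_leq -{1}card1 subset_leq_card // lt0n; apply/eqP => new0.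
  have := U_grow p.+1 n lt_pn (leqnn n); have := U_grow 1 p p_gt0 (ltnW lt_pn).
  by have := U_step p lt_pn; rewrite new0 U1 U_n; lia.
have /cards1P [v new_v] : #|nth set0 s p :\: nth set0 s j| == 1 by rewrite card1.
exists v; split.
  by apply/eqP; rewrite -new_v eqEcard sub new_card card1.
exists j => //; apply/subsetP => x; rewrite !inE => /andP [xv xp].
by apply: contraNT xv => xj; rewrite -in_set1 -new_v !inE xj xp.
Qed.
End Converse.

Section Complexes.
Variables (V : finType) (X : {set {set V}}) (d : nat).
Hypothesis X_complex : is_complex X.
Hypothesis X_pure : pure X d.

Lemma vertex_in_facet x : exists2 F, F \in facets X & x \in F.
Proof.
have [G [GX xG]] := X_complex.2 x.
have [|H /andP [HX GH] H_max] := @arg_maxnP _ G (fun H => (H \in X) && (G \subset H)) (fun H => #|H|).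
  by rewrite GX subxx.
exists H; last exact: subsetP GH _ xG.
rewrite inE HX; apply/forall_inP => K KX; apply/implyP => HK.
by rewrite eq_sym eqEcard HK; apply: H_max; rewrite KX (subset_trans GH HK).
Qed.

Lemma cover_facets s : s =i facets X -> \bigcup_(G <- s) G = [set: V].
Proof.
move=> sX; apply/eqP; rewrite eqEsubset subsetT; apply/subsetP => x _.
have [F XF xF] := vertex_in_facet x.
by rewrite bigcup_seq; apply/bigcupP; exists F; rewrite ?sX.
Qed.

Lemma stacking_order_count_paths s : stacking_order X s ->
  #|V| = #|facets X| + d /\
  forall f f', f \in facets X -> f' \in facets X -> exists! w, is_path_from X d f f' w.
Proof.
case=> s_gt0 [s_uniq [s_facets s_stack]].
have sX : s =i facets X by move=> F; apply/idP/idP => /s_facets.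
have s_pure g : g \in s -> #|g| = d.+1 by rewrite sX; apply: X_pure.
have s_nil : s != [::] by rewrite -size_eq0 -lt0n.
have [s_unique s_connected s_count] := stacking_paths_count s_nil s_stack s_pure.
have size_s : size s = #|facets X| by rewrite -(card_uniqP s_uniq); apply: eq_card.
split; first by rewrite -cardsT -(cover_facets sX) s_count size_s.
move=> f f'; rewrite -!sX => sf sf'.
have [w [sw w_head w_last]] := s_connected f f' sf sf'.
exists w; split; first by apply/is_path_fromE; rewrite -(eq_pathb _ _ sX).
move=> w' /is_path_fromE [Xw' w'_head w'_last].
apply: s_unique => //; last by rewrite w_last w'_last.
  by rewrite (eq_pathb _ _ sX).
by rewrite w_head w'_head.
Qed.

Lemma count_paths_stacking_order : 0 < #|facets X| -> #|V| = #|facets X| + d ->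
  (forall f f', f \in facets X -> f' \in facets X -> exists w, is_path_from X d f f' w) ->
  exists s, stacking_order X s.
Proof.
move=> X_gt0 V_count X_paths.
have X_connected : paths_exist d (mem (facets X)).
  by move=> a b Xa Xb; have [w /is_path_fromE] := X_paths a b Xa Xb; exists w.
have [s [s_uniq sX s_adj]] := adjacent_enumeration X_connected X_gt0.
have size_s : size s = #|facets X| by rewrite -(card_uniqP s_uniq); apply: eq_card.
exists s; split; first by rewrite size_s.
split => //; split; first by move=> F; rewrite sX.
apply: (stacking_condition_of_count (d := d)) => //; rewrite ?size_s //.
- by move=> g; rewrite sX; apply: X_pure.
- by rewrite (cover_facets sX) cardsT.
Qed.

End Complexes.

Theorem proposition2p6 (V : finType) (X : {set {set V}}) (d : nat) :
  is_complex X -> pure X d -> 1 <= #|facets X| ->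
  (stacked X <->
   (#|V| = #|facets X| + d /\
    forall f f' : {set V}, f \in facets X -> f' \in facets X ->
      exists! w : seq {set V}, is_path_from X d f f' w)).
Proof.
move=> X_complex X_pure X_gt0; split => [[d' [_ [s s_order]]] | [V_count X_paths]].
  exact: stacking_order_count_paths s_order.
exists d; split => //; apply: (count_paths_stacking_order (d := d)) => // f f' Xf Xf'.
by have [w [w_path _]] := X_paths f f' Xf Xf'; exists w.
Qed.
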